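(* Let $(X,T,Y)$, $\psi$, $\mathcal G=\{g_\theta:\theta\in\Theta\}$ and $L$ be as described in the context, with $\psi$ satisfying Assumption 1, and suppose the policy class is correctly specified for the surrogate loss, i.e. $$\mathcal G\cap\Big(\operatorname*{argmin}_{g\ \text{unconstrained}}\mathbb E\big[|\psi|\, l(g(X),\operatorname{sign}(\psi))\big]\Big)\neq\varnothing,$$ where the argmin ranges over all measurable $g:\mathcal X\to\mathbb R$. Define $$m(X;\theta)=\mathbb E\big[|\psi|\, l'(g_\theta(X),\operatorname{sign}(\psi))\mid X\big].$$ Then for $\theta^*\in\Theta$, $$\theta^*\in\operatorname*{argmin}_{\theta\in\Theta}L(\theta)\iff m(X;\theta^* )=0\ \text{almost surely}.$$
   Context: $X$ is a context taking values in a space $\mathcal X$, $T\in\{-1,1\}$ is a treatment, $Y\in\mathbb R$ is an outcome, and $Y(-1),Y(1)$ are potential outcomes with $Y=Y(T)$ and $Y(t)\perp T\mid X$ for each $t$. A score variable $\psi$ is a real-valued random variable depending on observables. Assumption 1: $\mathbb E[\psi\mid X]=\mathbb E[Y(1)-Y(-1)\mid X]$ almost surely and $\mathbb E[|\psi|]<\infty$. $\Theta\subseteq\mathbb R^d$ and each $g_\theta:\mathcal X\to\mathbb R$ is measurable. The logistic surrogate loss is $l(g,s)=2\log(1+\exp(g))-(s+1)g$ for $g\in\mathbb R$, $s\in\{-1,1\}$, with derivative in $g$ given by $l'(g,s)=2\sigma(g)-(s+1)$, where $\sigma(g)=\exp(g)/(1+\exp(g))$. The population surrogate risk is $L(\theta)=\mathbb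 E[|\psi|\, l(g_\theta(X),\operatorname{sign}(\psi))]$. *)

From HB Require Import structures.
From mathcomp Require Import all_boot all_order all_algebra.
From mathcomp Require Import all_classical all_reals all_analysis.
Set Implicit Arguments. Unset Strict Implicit. Unset Printing Implicit Defensive.
Import Order.TTheory GRing.Theory Num.Theory.
Import numFieldNormedType.Exports.
Local Open Scope classical_set_scope.
Local Open Scope ring_scope.

Section Defs.
Variable R : realType.

(* sign with values in {-1,1}; the convention at 0 is irrelevant since it is
   always multiplied by |psi| = 0 there. *)
Definition sgn (x : R) : R := if x < 0 then -1 else 1.

Definition sigmoid (g : R) : R := expR g / (1 + expR g).

Definition lloss (g s : R) : R := 2 * ln (1 + expR g) - (s + 1) * g.
Definition lloss' (g s : R) : R := 2 * sigmoid g - (s + 1).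
End Defs.

Section CondExp.
Context {dO dX : measure_display} {R : realType}
  {Omega : measurableType dO} {XX : measurableType dX}.

(* h : XX -> R is a version of E[Z | X], i.e. h(X) is a version of the
   conditional expectation of Z given sigma(X). *)
Definition is_cond_exp (P : probability Omega R) (X : Omega -> XX)
    (Z : Omega -> R) (h : XX -> R) : Prop :=
  [/\ measurable_fun setT h,
      P.-integrable setT (EFin \o Z),
      P.-integrable setT (EFin \o (h \o X)) &
      forall B : set XX, measurable B ->
        (\int[P]_(w in X @^-1` B) (Z w)%:E =
         \int[P]_(w in X @^-1` B) (h (X w))%:E)%E ].

Definition cond_indep (P : probability Omega R) (X : Omega -> XX)
    (U V : Omega -> R) : Prop :=
  forall A B : set R, measurable A -> measurable B ->
    exists hU hV hUV : XX -> R,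
      [/\ is_cond_exp P X (\1_(U @^-1` A) : Omega -> R) hU,
          is_cond_exp P X (\1_(V @^-1` B) : Omega -> R) hV,
          is_cond_exp P X (\1_(U @^-1` A `&` V @^-1` B) : Omega -> R) hUV &
          {ae P, forall w, hUV (X w) = hU (X w) * hV (X w)} ].
End CondExp.

Section Risk.
Context {dO dX : measure_display} {R : realType}
  {Omega : measurableType dO} {XX : measurableType dX}.

Definition surrogate_risk (P : probability Omega R) (X : Omega -> XX)
    (psi : Omega -> R) (h : XX -> R) : \bar R :=
  (\int[P]_w (`|psi w| * lloss (h (X w)) (sgn (psi w)))%:E)%E.
End Risk.

From HB Require Import structures.
From mathcomp Require Import all_boot all_order all_algebra.
From mathcomp Require Import all_classical all_reals all_analysis.
From mathcomp Require Import ring lra measurable_realfun.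
Import Order.TTheory GRing.Theory Num.Theory.
Import numFieldNormedType.Exports.
Local Open Scope classical_set_scope.
Local Open Scope ring_scope.

(* Perturbing a minimiser [k] of the surrogate risk by [t * 1_B(X)] and using
   the quadratic bound [l(g + t, s) <= l(g, s) + t l'(g, s) + 4 t^2] for
   [|t| <= 1/2] shows that [E[|psi| l'(k(X), sign psi) 1_B(X)] = 0] for every
   measurable [B], i.e. [m(X; k) = 0].  Conversely
   [l'(g, s) = 2 sigmoid g - (s + 1)] is strictly increasing in [g], so two
   functions with [m = 0] agree almost surely wherever [psi <> 0] and therefore
   have the same risk.  By correct specification the class contains a global
   minimiser, which has [m = 0]; hence every [theta*] with [m = 0] attains the
   same risk. *)

Section Logistic.
Context {R : realType}.
Implicit Types g s t x y : R.

Lemma sgnE x : sgn x = 1 \/ sgn x = -1.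
Proof. by rewrite /sgn; case: ifP; [right | left]. Qed.

Lemma measurable_sgn : measurable_fun setT (@sgn R).
Proof.
apply: measurable_fun_ifT => //.
exact: measurable_fun_ltr.
Qed.

Lemma sigmoid_ge0 g : 0 <= sigmoid g.
Proof. by rewrite /sigmoid divr_ge0 ?addr_ge0 ?expR_ge0. Qed.

Lemma sigmoid_lt1 g : sigmoid g < 1.
Proof. by rewrite /sigmoid ltr_pdivrMr ?mul1r ?ltrDr ?addr_gt0 ?expR_gt0. Qed.

Lemma sigmoid_lt : {homo @sigmoid R : x y / x < y}.
Proof.
move=> x y xy; have ex := expR_gt0 x; have ey := expR_gt0 y.
have -> : sigmoid y =
    sigmoid x + (expR y - expR x) / ((1 + expR x) * (1 + expR y)).
  by rewrite /sigmoid; field; apply/andP; split; apply/eqP; lra.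
by rewrite ltrDl divr_gt0 ?subr_gt0 ?ltr_expR // mulr_gt0 ?addr_gt0.
Qed.

Lemma continuous_sigmoid : continuous (@sigmoid R).
Proof.
move=> x; apply: continuousM; first exact: continuous_expR.
apply: continuousV; first by rewrite gt_eqF // addr_gt0 ?expR_gt0.
by apply: continuousD; [exact: cst_continuous | exact: continuous_expR].
Qed.

Lemma lloss_ge0 g s : s = 1 \/ s = -1 -> 0 <= lloss g s.
Proof.
rewrite /lloss; case=> ->.
- have : g <= ln (1 + expR g).
    by rewrite -{1}(expRK g) ler_ln ?posrE ?addr_gt0 ?expR_gt0 ?lerDr.
  lra.
- have : 0 <= ln (1 + expR g) by rewrite ln_ge0 // lerDl expR_ge0.
  lra.
Qed.

Lemma norm_lloss'_le2 g s : s = 1 \/ s = -1 -> `|lloss' g s| <= 2.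
Proof.
move=> s_pm1; have := sigmoid_ge0 g; have := sigmoid_lt1 g.
by rewrite /lloss' ler_norml; case: s_pm1 => -> S1 S0; apply/andP; split; lra.
Qed.

Lemma lloss'B g1 g2 s : lloss' g1 s - lloss' g2 s = 2 * (sigmoid g1 - sigmoid g2).
Proof. by rewrite /lloss'; ring. Qed.

Lemma expR_le_quad {t} : t <= 1/2 -> expR t <= 1 + t + 2 * t ^+ 2.
Proof.
move=> ht; have et := expR_gt0 t.
have : expR t * (1 - t) <= 1.
  rewrite -[leRHS](mulfV (lt0r_neq0 et)) -expRN ler_wpM2l ?expR_ge0 //.
  exact: expR_ge1Dx.
have : 0 <= t ^+ 2 * (1 - 2 * t) by rewrite mulr_ge0 ?sqr_ge0 //; lra.
move=> *; nra.
Qed.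

(* Since [l(g + t, s) - l(g, s) = 2 ln (1 + S (e^t - 1)) - (s + 1) t] with
   [S = sigmoid g], this follows from [ln (1 + u) <= u] and [expR_le_quad]. *)
Lemma lloss_le_quad g t s : `|t| <= 1/2 ->
  lloss (g + t) s <= lloss g s + t * lloss' g s + 4 * t ^+ 2.
Proof.
rewrite ler_norml => /andP [tl tu].
set S := sigmoid g; have S0 : 0 <= S := sigmoid_ge0 g.
have S1 : S < 1 := sigmoid_lt1 g.
have eg := expR_gt0 g; have et := expR_gt0 t; have t2 := sqr_ge0 t.
have ratioE : (1 + expR (g + t)) / (1 + expR g) = 1 + S * (expR t - 1).
  by rewrite /S /sigmoid expRD; field; apply/eqP; lra.
have lnD : ln (1 + expR (g + t)) - ln (1 + expR g) <= S * (expR t - 1).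
  rewrite -ln_div ?posrE ?addr_gt0 ?expR_gt0 // ratioE le_ln1Dx //.
  have : - S <= S * (expR t - 1) by nra.
  lra.
have := expR_le_quad tu.
rewrite /lloss /lloss' -/S; nra.
Qed.

End Logistic.

Lemma linear_coef_eq0 (R : realFieldType) (c j : R) : 0 <= c ->
  (forall t, `|t| <= 1/2 -> 0 <= t * j + 4 * t ^+ 2 * c) -> j = 0.
Proof.
move=> c0 quad_ge0; have j0 := normr_ge0 j.
have D0 : 0 < 8 * c + 2 * `|j| + 1 by lra.
pose e := (8 * c + 2 * `|j| + 1)^-1.
have e0 : 0 < e by rewrite invr_gt0.
have eD : e * (8 * c + 2 * `|j| + 1) = 1 by rewrite mulVf ?gt_eqF.
have ej : 0 <= e * `|j| by rewrite mulr_ge0 // ltW.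
have ec : 8 * (e * c) <= 1 by have := mulr_ge0 (ltW e0) c0; nra.
have small : `|- j * e| <= 1/2 by rewrite normrM normrN (gtr0_norm e0); nra.
have := quad_ge0 _ small.
have -> : - j * e * j + 4 * (- j * e) ^+ 2 * c = j ^+ 2 * e * (4 * (e * c) - 1).
  by ring.
have j2e : 0 <= j ^+ 2 * e by rewrite mulr_ge0 ?sqr_ge0 // ltW.
move=> h; have : j ^+ 2 * e <= 0 by nra.
rewrite pmulr_lle0 // => j2le0.
by apply/eqP; rewrite -sqrf_eq0 eq_le j2le0 sqr_ge0.
Qed.

Lemma measurable_set_ltr {d} {T : measurableType d} {R : realType}
    {f g : T -> R} : measurable_fun setT f -> measurable_fun setT g ->
  measurable [set x | f x < g x].
Proof.
move=> mf mg.
have := measurable_funB mg mf measurableT (measurable_itv `]0, +oo[).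
rewrite setTI; congr measurable; apply/seteqP; split => x /=;
  by rewrite in_itv /= andbT subr_gt0.
Qed.

Section SurrogateRisk.
Context {dO dX : measure_display} {R : realType}
  {Omega : measurableType dO} {XX : measurableType dX}.
Variables (P : probability Omega R) (X : Omega -> XX) (psi : Omega -> R).
Hypotheses (mX : measurable_fun setT X) (mpsi : measurable_fun setT psi).
Hypothesis ipsi : P.-integrable setT (EFin \o (fun w => `|psi w|)).
Implicit Types (k h : XX -> R) (B : set XX).

Definition wloss k w := `|psi w| * lloss (k (X w)) (sgn (psi w)).
Definition wloss' k w := `|psi w| * lloss' (k (X w)) (sgn (psi w)).

(* [m(X; k) = 0] a.s., stated through the defining property of [E[. | X]]. *)
Definition cond_score_eq0 k :=
  forall B, measurable B -> (\int[P]_(w in X @^-1` B) (wloss' k w)%:E = 0)%E.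

Let mnorm_psi : measurable_fun setT (fun w => `|psi w|).
Proof. exact: measurableT_comp (@normr_measurable _ _) mpsi. Qed.

Let msgn_psi : measurable_fun setT (fun w => sgn (psi w)).
Proof. exact: measurableT_comp measurable_sgn mpsi. Qed.

Let measurable_preimage B : measurable B -> measurable (X @^-1` B).
Proof. by move=> mB; rewrite -[X @^-1` B]setTI; exact: mX. Qed.

Lemma measurable_wloss k :
  measurable_fun setT k -> measurable_fun setT (wloss k).
Proof.
move=> mk; have mkX := measurableT_comp mk mX.
apply: measurable_funM => //; apply: measurable_funB.
  apply: measurable_funM => //; apply: measurableT_comp => //.
  by apply: measurable_funD => //; exact: measurableT_comp.
by apply: measurable_funM => //; exact: measurable_funD.
Qed.

Lemma measurable_wloss' k :
  measurable_fun setT k -> measurable_fun setT (wloss' k).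
Proof.
move=> mk; have mkX := measurableT_comp mk mX.
have msigmoid := continuous_measurable_fun (@continuous_sigmoid R).
apply: measurable_funM => //; apply: measurable_funB.
  by apply: measurable_funM => //; exact: measurableT_comp.
exact: measurable_funD.
Qed.

Lemma wloss_ge0 k w : 0 <= wloss k w.
Proof. by rewrite mulr_ge0 ?lloss_ge0 //; exact: sgnE. Qed.

Lemma integrable_wloss' k : measurable_fun setT k ->
  P.-integrable setT (EFin \o wloss' k).
Proof.
move=> mk; apply: le_integrable (integrableZl measurableT 2 ipsi) => //.
  exact/measurable_EFinP/measurable_wloss'.
move=> w _ /=; rewrite lee_fin normrM normr_id [`|2 * _|]normrM normr_id.
by rewrite mulrC (@ger0_norm _ 2) // ler_wpM2r ?norm_lloss'_le2 //; exact: sgnE.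
Qed.

Lemma surrogate_risk_ge0 k : (0 <= surrogate_risk P X psi k)%E.
Proof. by apply: integral_ge0 => w _; rewrite lee_fin wloss_ge0. Qed.

Lemma surrogate_risk_cst0 :
  surrogate_risk P X psi (fun _ => 0) = ((2 * ln 2)%:E * \int[P]_w `|psi w|%:E)%E.
Proof.
rewrite -integralZl //; apply: eq_integral => w _.
by rewrite -EFinM /lloss expR0 mulr0 subr0 mulrC.
Qed.

Lemma integral_preimage B (f : Omega -> R) :
  (\int[P]_(w in X @^-1` B) (f w)%:E = \int[P]_w (\1_B (X w) * f w)%:E)%E.
Proof.
rewrite integral_mkcond; apply: eq_integral => w _.
rewrite patchE indicE -[X w \in B]/(w \in X @^-1` B).
by case: (w \in _); rewrite ?mul1r ?mul0r.
Qed.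

Lemma wloss_perturb_le k B t w : `|t| <= 1/2 ->
  wloss (fun x => k x + t * \1_B x) w <=
  wloss k w + t * (\1_B (X w) * wloss' k w) + 4 * t ^+ 2 * `|psi w|.
Proof.
move=> ht; have psi0 := normr_ge0 (psi w).
set u := t * \1_B (X w).
have hu : `|u| <= 1/2.
  rewrite /u normrM indicE.
  by case: (_ \in _); rewrite ?normr1 ?normr0 ?mulr1 ?mulr0.
have u2 : u ^+ 2 <= t ^+ 2.
  rewrite /u exprMn indicE.
  by case: (_ \in _); rewrite ?expr1n ?mulr1 ?expr0n ?mulr0 ?sqr_ge0.
have := ler_wpM2l psi0 (lloss_le_quad (k (X w)) u (sgn (psi w)) hu).
rewrite /wloss /wloss' /=; set l := lloss _ _; set l' := lloss' _ _ => hl.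
have -> : t * (\1_B (X w) * (`|psi w| * l')) = `|psi w| * (u * l').
  by rewrite /u; ring.
have : `|psi w| * u ^+ 2 <= `|psi w| * t ^+ 2 by exact: ler_wpM2l.
nra.
Qed.

Lemma surrogate_risk_perturb_le k B t :
  measurable_fun setT k -> measurable B ->
  P.-integrable setT (EFin \o wloss k) -> `|t| <= 1/2 ->
  (surrogate_risk P X psi (fun x => k x + t * \1_B x)%R <=
   surrogate_risk P X psi k + t%:E * \int[P]_(w in X @^-1` B) (wloss' k w)%:E
   + (4 * t ^+ 2)%:E * \int[P]_w `|psi w|%:E)%E.
Proof.
move=> mk mB iL ht; rewrite integral_preimage.
set G := fun w => \1_B (X w) * wloss' k w.
have mG : measurable_fun setT G.
  apply: measurable_funM; last exact: measurable_wloss'.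
  exact: measurableT_comp (measurable_indic mB) mX.
have iG : P.-integrable setT (EFin \o G).
  apply: (le_integrable measurableT _ _ (integrable_wloss' _ mk)).
    exact/measurable_EFinP.
  move=> w _ /=; rewrite lee_fin /G normrM indicE.
  by case: (_ \in _); rewrite ?normr1 ?mul1r ?normr0 ?mul0r.
have iZG : P.-integrable setT (fun w => t%:E * (G w)%:E)%E.
  exact: integrableZl.
rewrite -!integralZl // /surrogate_risk -integralD // -integralD //; last 2 first.
- exact: integrableD.
- exact: integrableZl.
apply: ge0_le_integral => //.
- by move=> w _; rewrite lee_fin; exact: (wloss_ge0 (fun x => k x + t * \1_B x)).
- apply/measurable_EFinP/(measurable_wloss (fun x => k x + t * \1_B x)).
  by apply: measurable_funD => //; exact/measurable_funM/measurable_indic.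
- apply/measurable_EFinP; apply: measurable_funD; last exact: measurable_funM.
  apply: measurable_funD; first exact: measurable_wloss.
  exact: measurable_funM.
- by move=> w _; rewrite -!EFinM -!EFinD lee_fin; exact: wloss_perturb_le.
Qed.

Lemma cond_score_eq0_of_min k : measurable_fun setT k ->
  (forall h, measurable_fun setT h ->
     (surrogate_risk P X psi k <= surrogate_risk P X psi h)%E) ->
  cond_score_eq0 k.
Proof.
move=> mk kmin B mB.
have c_fin : (\int[P]_w `|psi w|%:E)%E \is a fin_num by exact: integrable_fin_num.
have r_fin : surrogate_risk P X psi k \is a fin_num.
  rewrite ge0_fin_numE ?surrogate_risk_ge0 //.
  have := kmin (fun=> 0) (measurable_cst _).
  rewrite surrogate_risk_cst0 -(fineK c_fin) -EFinM => /le_lt_trans->//.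
  exact: ltry.
have iL : P.-integrable setT (EFin \o wloss k).
  apply/integrableP; split; first exact/measurable_EFinP/measurable_wloss.
  rewrite (_ : (\int[P]_w _)%E = surrogate_risk P X psi k) -?ge0_fin_numE //.
    exact: surrogate_risk_ge0.
  by apply: eq_integral => w _ /=; rewrite ger0_norm ?wloss_ge0.
have j_fin : (\int[P]_(w in X @^-1` B) (wloss' k w)%:E)%E \is a fin_num.
  apply: integrable_fin_num; first exact: measurable_preimage.
  exact: integrableS measurableT (measurable_preimage _ mB) (@subsetT _ _)
    (integrable_wloss' _ mk).
rewrite -(fineK j_fin); congr EFin.
apply: (@linear_coef_eq0 _ (fine (\int[P]_w `|psi w|%:E)%E)) => [|t ht].
  by rewrite fine_ge0 // integral_ge0.
have mkt : measurable_fun setT (fun x => k x + t * \1_B x).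
  apply: measurable_funD => //.
  by apply: measurable_funM => //; exact: measurable_indic.
move: (le_trans (kmin _ mkt) (surrogate_risk_perturb_le _ _ _ mk mB iL ht)).
rewrite -(fineK c_fin) -(fineK r_fin) -(fineK j_fin) -!EFinM -!EFinD lee_fin /=.
lra.
Qed.

Lemma wloss'B k1 k2 w : wloss' k1 w - wloss' k2 w =
  2 * `|psi w| * (sigmoid (k1 (X w)) - sigmoid (k2 (X w))).
Proof. by rewrite /wloss' -mulrBr lloss'B mulrCA mulrA. Qed.

(* On [k2 < k1] the score difference [wloss' k1 - wloss' k2] is nonnegative with
   zero integral, hence vanishes a.e., and it vanishes only where [psi = 0]. *)
Lemma cond_score_eq0_psi0 {k1 k2} :
  measurable_fun setT k1 -> measurable_fun setT k2 ->
  cond_score_eq0 k1 -> cond_score_eq0 k2 ->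
  {ae P, forall w, k2 (X w) < k1 (X w) -> psi w = 0}.
Proof.
move=> mk1 mk2 score1 score2.
have mB := measurable_set_ltr mk2 mk1; set B := [set x | _] in mB.
have mA := measurable_preimage _ mB; set A := X @^-1` B in mA.
have iA k : measurable_fun setT k -> P.-integrable A (EFin \o wloss' k).
  move=> mk.
  exact: integrableS measurableT mA (@subsetT _ _) (integrable_wloss' _ mk).
have D_ge0 w : A w -> 0 <= wloss' k1 w - wloss' k2 w.
  by move=> /sigmoid_lt lt; rewrite wloss'B !mulr_ge0 // subr_ge0 ltW.
have mD : measurable_fun A (EFin \o (fun w => wloss' k1 w - wloss' k2 w)).
  apply/measurable_EFinP/(measurable_funS measurableT) => //.
  by apply: measurable_funB; exact: measurable_wloss'.
have : (\int[P]_(w in A) `|(wloss' k1 w - wloss' k2 w)%:E| = 0)%E.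
  transitivity (\int[P]_(w in A) (wloss' k1 w - wloss' k2 w)%:E)%E.
    by apply: eq_integral => w /[!inE] Aw; rewrite /= ger0_norm ?D_ge0.
  under eq_integral do rewrite EFinB.
  by rewrite integralB ?iA // score1 // score2 // subee.
move/(ae_eq_integral_abs P mA mD); apply: filterS => w D0 lt.
have := D0 lt; rewrite /= => /eqP; rewrite eqe wloss'B !mulf_eq0.
by rewrite pnatr_eq0 normr_eq0 subr_eq0 (gt_eqF (sigmoid_lt _ _ lt)) orbF => /eqP.
Qed.

Lemma cond_score_eq0_risk_eq {k1 k2} :
  measurable_fun setT k1 -> measurable_fun setT k2 ->
  cond_score_eq0 k1 -> cond_score_eq0 k2 ->
  surrogate_risk P X psi k1 = surrogate_risk P X psi k2.
Proof.
move=> mk1 mk2 score1 score2.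
have psi0_12 := cond_score_eq0_psi0 mk1 mk2 score1 score2.
have psi0_21 := cond_score_eq0_psi0 mk2 mk1 score2 score1.
apply: ae_eq_integral => //.
- exact/measurable_EFinP/measurable_wloss.
- exact/measurable_EFinP/measurable_wloss.
apply: filterS2 psi0_12 psi0_21 => w psi0_12 psi0_21 _ /=.
case: (ltrgtP (k1 (X w)) (k2 (X w))) => [/psi0_21|/psi0_12|->] //;
  by rewrite /wloss => ->; rewrite normr0 !mul0r.
Qed.

Lemma cond_score_eq0P k : measurable_fun setT k ->
  cond_score_eq0 k <->
  exists m, is_cond_exp P X (wloss' k) m /\ {ae P, forall w, m (X w) = 0}.
Proof.
move=> mk; split=> [score0 | [m [[mm _ _ condE] m0]] B mB].
  exists (fun=> 0); split; last exact: aeW.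
  split => [||| B mB]; first exact: measurable_cst.
  - exact: integrable_wloss'.
  - exact: integrable0.
  - by rewrite score0 // integral0.
rewrite condE // -(integral0 P (X @^-1` B)).
apply: ae_eq_integral => //; first exact: measurable_preimage.
- apply: (measurable_funS measurableT) => //.
  exact/measurable_EFinP/measurableT_comp.
- by apply: filterS m0 => w /= -> _.
Qed.

End SurrogateRisk.

Theorem theorem2 (dO dX : measure_display) (R : realType)
  (Omega : measurableType dO) (XX : measurableType dX)
  (P : probability Omega R)
  (X : Omega -> XX) (T Y Y1 Ym1 psi : Omega -> R)
  (d : nat) (Theta : set 'rV[R]_d) (g : 'rV[R]_d -> XX -> R)
  (thetastar : 'rV[R]_d) :
  (* the data (X, T, Y) and potential outcomes Y(1), Y(-1) *)
  measurable_fun setT X -> measurable_fun setT T -> measurable_fun setT Y ->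
  measurable_fun setT Y1 -> measurable_fun setT Ym1 ->
  (forall w, T w = 1 \/ T w = -1) ->
  (forall w, Y w = if T w == 1 then Y1 w else Ym1 w) ->
  cond_indep P X Y1 T -> cond_indep P X Ym1 T ->
  (* psi is a score variable depending on the observables *)
  (exists f : XX * R * R -> R,
      measurable_fun setT f /\ forall w, psi w = f (X w, T w, Y w)) ->
  (* Assumption 1 *)
  (exists h1 h2 : XX -> R,
      [/\ is_cond_exp P X psi h1,
          is_cond_exp P X (fun w => Y1 w - Ym1 w) h2 &
          {ae P, forall w, h1 (X w) = h2 (X w)}]) ->
  P.-integrable setT (EFin \o (fun w => `|psi w|)) ->
  (* the policy class *)
  (forall th, Theta th -> measurable_fun setT (g th)) ->
  (* correct specification *)
  (exists th0, Theta th0 /\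
     forall h : XX -> R, measurable_fun setT h ->
       (surrogate_risk P X psi (g th0) <= surrogate_risk P X psi h)%E) ->
  Theta thetastar ->
  ((forall th, Theta th ->
      (surrogate_risk P X psi (g thetastar) <= surrogate_risk P X psi (g th))%E)
   <->
   exists m : XX -> R,
     is_cond_exp P X
       (fun w => `|psi w| * lloss' (g thetastar (X w)) (sgn (psi w))) m /\
     {ae P, forall w, m (X w) = 0}).
Proof.
move=> mX mT mY _ _ _ _ _ _ [f [mf psiE]] _ ipsi mg [th0 [Th0 th0_min]] Th_star.
have mpsi : measurable_fun setT psi.
  rewrite (_ : psi = f \o (fun w => (X w, T w, Y w))); last exact/funext.
  apply: measurableT_comp => //.
  by apply: measurable_fun_pair => //; exact: measurable_fun_pair.
have score_th0 := cond_score_eq0_of_min P X psi mX mpsi ipsi _ (mg _ Th0) th0_min.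
apply: iff_trans (cond_score_eq0P P X psi mX mpsi ipsi _ (mg _ Th_star)).
split=> [star_min | score_star th Th].
- apply: (cond_score_eq0_of_min P X psi mX mpsi ipsi _ (mg _ Th_star)) => h mh.
  exact: le_trans (star_min _ Th0) (th0_min _ mh).
- rewrite (cond_score_eq0_risk_eq P X psi mX mpsi ipsi (mg _ Th_star) (mg _ Th0)
    score_star score_th0).
  exact: th0_min (mg _ Th).
Qed.
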